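(* Let $n\ge1$ and $d\ge1$ be integers, $p\in(0,1)$, $\delta\in(0,1)$, and let $I\subseteq[n]$ be a fixed set with $|I|\le d$. Let $m$ be a positive integer with $$m\ \ge\ \max_{0\le w\le d-1}\frac{(d-w)\ln n+\ln(1/\delta)+\ln(d^22^d)}{\min\left(\ln\frac{1}{1-2p^d+2p^{2d-w}},\ \ln\frac{1}{1+p^d-p^w}\right)}$$ (maximum over integers $w$). Let $M$ be a random $m\times n$ matrix whose entries are independent, each equal to $0$ with probability $p$ and to $1$ with probability $1-p$. Then with probability at least $1-\delta$ the matrix $M$ is $(I,d)$-separable.
   Context: For $J\subseteq[n]$ and $a\in\{0,1\}^n$, $T(J,a)=1$ if $a_j=1$ for some $j\in J$ and $T(J,a)=0$ otherwise. For an $m\times n$ 0/1 matrix $M$ with rows $M_1,\dots,M_m$, $T(J,M)=(T(J,M_i))_{i=1}^m$. The matrix $M$ is $(I,d)$-separable if for every $J\subseteq[n]$ with $|J|\le d$ and $J\ne I$ we have $T(J,M)\ne T(I,M)$. *)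

From HB Require Import structures.
From mathcomp Require Import all_boot all_order all_algebra.
From mathcomp Require Import boolp reals exp.
Set Implicit Arguments. Unset Strict Implicit. Unset Printing Implicit Defensive.
Import Order.TTheory GRing.Theory Num.Theory.
Local Open Scope ring_scope.

(* T(J,a) for a row a of a 0/1 matrix (entries: true = 1, false = 0). *)
Definition Trow (m n : nat) (J : {set 'I_n}) (M : 'M[bool]_(m, n)) (i : 'I_m) : bool :=
  [exists j in J, M i j].

Definition TM (m n : nat) (J : {set 'I_n}) (M : 'M[bool]_(m, n)) : {ffun 'I_m -> bool} :=
  [ffun i => Trow J M i].

Definition separable (m n : nat) (I : {set 'I_n}) (d : nat) (M : 'M[bool]_(m, n)) : Prop :=
  forall J : {set 'I_n}, (#|J| <= d)%N -> J <> I -> TM J M <> TM I M.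

Definition mx_weight (R : realType) (p : R) (m n : nat) (M : 'M[bool]_(m, n)) : R :=
  \prod_(i < m) \prod_(j < n) (if M i j then 1 - p else p).

Definition mx_prob (R : realType) (p : R) (m n : nat) (E : 'M[bool]_(m, n) -> Prop) : R :=
  \sum_(M : 'M[bool]_(m, n) | `[< E M >]) mx_weight p M.

From HB Require Import structures.
From mathcomp Require Import all_boot all_order all_algebra.
From mathcomp Require Import boolp reals sequences exp.
From mathcomp Require Import ring lra zify.
Import Order.TTheory GRing.Theory Num.Theory.
Set Implicit Arguments. Unset Strict Implicit. Unset Printing Implicit Defensive.
Local Open Scope ring_scope.

(* One row r of M satisfies T(J,r) = T(I,r) with probability
   q = 1 - p^|I| - p^|J| + 2 p^|I ∪ J|, independently of the other rows, so J is
   confused with I with probability q^m.  With b = |J \ I| and w = d - max(1, b),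
   q is at most one of the two bases 1 - 2p^d + 2p^(2d-w) and 1 + p^d - p^w, hence the
   hypothesis on m gives q^m <= δ / (d^2 2^d n^max(1,b)).  A union bound over J then
   finishes the proof, since splitting J into J ∩ I and J \ I shows
   Σ_{|J| <= d} n^-max(1,|J \ I|) <= 2^|I| (d + 1) <= d^2 2^d for d >= 2 (for d = 1
   there are only n + 1 sets J, each contributing at most 1/n). *)

Lemma prodr_if_all (R : comPzSemiRingType) (I : finType) (b : pred I) (x : I -> R) :
  \prod_i (if b i then x i else 0) = if [forall i, b i] then \prod_i x i else 0.
Proof.
case: (boolP [forall i, b i]) => [/forallP ball | /forallPn [i bNi]].
  by apply: eq_bigr => i _; rewrite ball.
by rewrite (bigD1 i) //= (negbTE bNi) mul0r.
Qed.

Section RowProbability.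
Variables (R : realType) (p : R).

Definition bit_weight (b : bool) : R := if b then 1 - p else p.

Definition row_weight n (r : {ffun 'I_n -> bool}) : R := \prod_j bit_weight (r j).

Definition hits n (S : {set 'I_n}) (r : {ffun 'I_n -> bool}) : bool := [exists j in S, r j].

(* Both sets missed: p^u with u = |I ∪ J|; both hit: 1 - p^i - p^j + p^u. *)
Definition agree_prob (i j u : nat) : R := 1 - p ^+ i - p ^+ j + 2 * p ^+ u.

Lemma sum_ffun_prod n (F : 'I_n -> bool -> R) :
  \sum_(r : {ffun 'I_n -> bool}) \prod_j F j (r j) = \prod_j (F j true + F j false).
Proof. by rewrite -bigA_distr_bigA; apply: eq_bigr => j _; rewrite big_bool. Qed.

Lemma row_weight_sum1 n : \sum_(r : {ffun 'I_n -> bool}) row_weight r = 1.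
Proof.
by rewrite (sum_ffun_prod (fun _ => bit_weight)) big1 // => j _; rewrite subrK.
Qed.

Lemma row_prob_miss n (S : {set 'I_n}) :
  \sum_(r | ~~ hits S r) row_weight r = p ^+ #|S|.
Proof.
rewrite big_mkcond /=.
under eq_bigr => r _ do rewrite /hits negb_exists -prodr_if_all.
rewrite (sum_ffun_prod (fun j b => if ~~ ((j \in S) && b) then bit_weight b else 0)).
rewrite -prodr_const [RHS]big_mkcond; apply: eq_bigr => j _ /=.
by rewrite andbT andbF; case: (j \in S); rewrite /= ?add0r ?subrK.
Qed.

Lemma hitsU n (I J : {set 'I_n}) r : hits (I :|: J) r = hits I r || hits J r.
Proof.
apply/existsP/orP => [[j /andP[]] | [] /existsP[j /andP[jS rj]]].
- by rewrite in_setU => /orP[] jS rj; [left | right]; apply/existsP; exists j; rewrite jS.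
- by exists j; rewrite in_setU jS.
- by exists j; rewrite in_setU jS orbT.
Qed.

Lemma row_prob_agree n (I J : {set 'I_n}) :
  \sum_(r | hits J r == hits I r) row_weight r = agree_prob #|I| #|J| #|I :|: J|.
Proof.
pose restrict (P : pred {ffun 'I_n -> bool}) r := if P r then row_weight r else 0.
have inclusion_exclusion r : restrict (fun r => hits J r == hits I r) r =
    row_weight r - restrict (fun r => ~~ hits I r) r - restrict (fun r => ~~ hits J r) r
    + 2 * restrict (fun r => ~~ hits (I :|: J) r) r.
  by rewrite /restrict hitsU; case: (hits I r); case: (hits J r) => /=; ring.
rewrite big_mkcond (eq_bigr _ (fun r _ => inclusion_exclusion r)).
by rewrite !big_split /= -mulr_sumr !sumrN -!big_mkcond !row_prob_miss row_weight_sum1.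
Qed.

Hypothesis p01 : 0 <= p <= 1.

Lemma row_weight_ge0 n (r : {ffun 'I_n -> bool}) : 0 <= row_weight r.
Proof.
case/andP: p01 => p_ge0 p_le1.
by apply: prodr_ge0 => j _; rewrite /bit_weight; case: (r j); rewrite ?subr_ge0.
Qed.

Lemma agree_prob_ge0 n (I J : {set 'I_n}) : 0 <= agree_prob #|I| #|J| #|I :|: J|.
Proof. by rewrite -row_prob_agree sumr_ge0 // => r _; exact: row_weight_ge0. Qed.

End RowProbability.

Section MatrixProbability.
Variables (R : realType) (p : R).

Definition row_ffun m n (M : 'M[bool]_(m, n)) (i : 'I_m) : {ffun 'I_n -> bool} :=
  [ffun j => M i j].

Lemma mx_weight_rows m n (M : 'M[bool]_(m, n)) :
  mx_weight p M = \prod_i row_weight p (row_ffun M i).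
Proof. by apply: eq_bigr => i _; apply: eq_bigr => j _; rewrite ffunE. Qed.

Lemma sum_mx_rows m n (G : 'I_m -> {ffun 'I_n -> bool} -> R) :
  \sum_(M : 'M[bool]_(m, n)) \prod_i G i (row_ffun M i) =
  \prod_i \sum_(r : {ffun 'I_n -> bool}) G i r.
Proof.
rewrite bigA_distr_bigA /=.
rewrite (reindex (fun f : {ffun 'I_m -> {ffun 'I_n -> bool}} => \matrix_(i, j) f i j)) /=.
  apply: eq_bigr => f _; apply: eq_bigr => i _; congr G.
  by apply/ffunP => j; rewrite !ffunE mxE.
exists (fun M : 'M[bool]_(m, n) => [ffun i => row_ffun M i]) => [f _ | M _].
  by apply/ffunP => i; apply/ffunP => j; rewrite !ffunE mxE.
by apply/matrixP => i j; rewrite mxE !ffunE.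
Qed.

Lemma mx_weight_sum1 m n : \sum_(M : 'M[bool]_(m, n)) mx_weight p M = 1.
Proof.
under eq_bigr => M _ do rewrite mx_weight_rows.
by rewrite (sum_mx_rows (fun _ r => row_weight p r)) big1 // => i _; rewrite row_weight_sum1.
Qed.

Lemma eq_mx_prob m n (E F : 'M[bool]_(m, n) -> Prop) :
  (forall M, E M <-> F M) -> mx_prob p E = mx_prob p F.
Proof. by move=> EF; apply: eq_bigl => M; apply/asboolP/asboolP => /EF. Qed.

Lemma mx_probN m n (E : 'M[bool]_(m, n) -> Prop) :
  mx_prob p (fun M => ~ E M) = 1 - mx_prob p E.
Proof.
rewrite -(mx_weight_sum1 m n) (bigID (fun M => `[< E M >])) /= addrC addrK.
by apply: eq_bigl => M; rewrite asbool_neg.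
Qed.

Lemma mx_prob_rows m n (P : pred {ffun 'I_n -> bool}) :
  mx_prob p (fun M : 'M[bool]_(m, n) => forall i, P (row_ffun M i)) =
  (\sum_(r | P r) row_weight p r) ^+ m.
Proof.
rewrite /mx_prob (eq_bigl (fun M => [forall i, P (row_ffun M i)])); last first.
  by move=> M; apply/asboolP/forallP.
rewrite big_mkcond /=.
under eq_bigr => M _ do rewrite mx_weight_rows -prodr_if_all.
rewrite (sum_mx_rows (fun _ r => if P r then row_weight p r else 0)).
by rewrite prodr_const card_ord -big_mkcond.
Qed.

Lemma Trow_row_ffun m n (S : {set 'I_n}) (M : 'M[bool]_(m, n)) i :
  Trow S M i = hits S (row_ffun M i).
Proof. by apply: eq_existsb => j; rewrite ffunE. Qed.

Lemma TM_eq_rows m n (I J : {set 'I_n}) (M : 'M[bool]_(m, n)) :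
  TM J M = TM I M <-> forall i, hits J (row_ffun M i) == hits I (row_ffun M i).
Proof.
split=> [TJI i | rowsJI]; last first.
  by apply/ffunP => i; rewrite !ffunE !Trow_row_ffun; exact: (eqP (rowsJI i)).
move: (congr1 (fun f : {ffun _ -> bool} => f i) TJI).
by rewrite !ffunE !Trow_row_ffun => ->.
Qed.

Lemma mx_prob_TM_eq m n (I J : {set 'I_n}) :
  mx_prob p (fun M : 'M[bool]_(m, n) => TM J M = TM I M) =
  agree_prob p #|I| #|J| #|I :|: J| ^+ m.
Proof.
rewrite -row_prob_agree -mx_prob_rows; apply: eq_mx_prob => M; exact: TM_eq_rows.
Qed.

Lemma separable_iff m n (I : {set 'I_n}) d (M : 'M[bool]_(m, n)) :
  separable I d M <-> ~ exists2 J : {set 'I_n}, (#|J| <= d)%N && (J != I) & TM J M = TM I M.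
Proof.
split=> [sepM [J /andP[Jd /eqP JI] TJI] | noJ J Jd JI TJI]; first exact: sepM TJI.
by apply: noJ; exists J => //; rewrite Jd; apply/eqP.
Qed.

Hypothesis p01 : 0 <= p <= 1.

Lemma mx_weight_ge0 m n (M : 'M[bool]_(m, n)) : 0 <= mx_weight p M.
Proof. by rewrite mx_weight_rows prodr_ge0 // => i _; exact: row_weight_ge0. Qed.

Lemma mx_prob_union_bound m n (K : finType) (P : pred K)
    (E : K -> 'M[bool]_(m, n) -> Prop) :
  mx_prob p (fun M => exists2 k, P k & E k M) <= \sum_(k | P k) mx_prob p (E k).
Proof.
have restrict_ge0 (b : bool) M : 0 <= (if b then mx_weight p M else 0).
  by case: b; rewrite ?mx_weight_ge0.
rewrite /mx_prob [X in X <= _]big_mkcond.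
under [X in _ <= X]eq_bigr => k _ do rewrite big_mkcond.
rewrite exchange_big /=; apply: ler_sum => M _.
case: asboolP => [[k Pk EkM] | _]; last exact: sumr_ge0.
by rewrite (bigD1 k) //= asboolT // lerDl sumr_ge0.
Qed.

Lemma mx_prob_separable_ge m n (I : {set 'I_n}) d :
  1 - \sum_(J : {set 'I_n} | (#|J| <= d)%N && (J != I)) agree_prob p #|I| #|J| #|I :|: J| ^+ m
  <= mx_prob p (fun M : 'M[bool]_(m, n) => separable I d M).
Proof.
rewrite (eq_mx_prob (separable_iff I d)) mx_probN lerD2l lerN2.
under eq_bigr => J _ do rewrite -(@mx_prob_TM_eq m n I J).
exact: mx_prob_union_bound.
Qed.

End MatrixProbability.

Section Counting.
Variable R : realType.

Lemma sum_sets_by_card n d (h : nat -> R) :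
  \sum_(K : {set 'I_n} | (#|K| <= d)%N) h #|K| = \sum_(k < d.+1) 'C(n, k)%:R * h k.
Proof.
rewrite (partition_big (fun K : {set 'I_n} => inord #|K| : 'I_d.+1) xpredT) //=.
apply: eq_bigr => k _.
have -> : 'C(n, k) = #|[set K : {set 'I_n} | #|K| == k]| by rewrite card_draws card_ord.
rewrite mulr_natl -sumr_const.
apply: eq_big => [K | K /andP[Kd /eqP <-]]; last by rewrite inordK.
rewrite inE; apply/andP/eqP => [[Kd /eqP <-] | ->]; first by rewrite inordK.
by rewrite -ltnS ltn_ord inord_val.
Qed.

Lemma bin_leq_expn n k : ('C(n, k) <= n ^ k)%N.
Proof.
apply: (@leq_trans ('C(n, k) * k`!)); first by rewrite leq_pmulr ?fact_gt0.
rewrite bin_ffact ffact_prod.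
apply: (@leq_trans (\prod_(i < k) n)); first by apply: leq_prod => i _; exact: leq_subr.
by rewrite prod_nat_const card_ord.
Qed.

Lemma sum_inv_npow_small_sets n d : (0 < n)%N ->
  \sum_(K : {set 'I_n} | (#|K| <= d)%N) ((n%:R : R) ^+ maxn 1 #|K|)^-1 <= d.+1%:R.
Proof.
move=> n_gt0; rewrite (sum_sets_by_card n d (fun k => ((n%:R : R) ^+ maxn 1 k)^-1)).
apply: (@le_trans _ _ (\sum_(k < d.+1) (1 : R))); last by rewrite sumr_const card_ord.
apply: ler_sum => k _.
rewrite -natrX ler_pdivrMr ?ltr0n ?expn_gt0 ?n_gt0 // mul1r ler_nat.
exact: leq_trans (bin_leq_expn n k) (leq_pexp2l n_gt0 (leq_maxr 1 k)).
Qed.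

Lemma ler_sum_inj (A B : finType) (P : pred A) (Q : pred B) (f : A -> B) (h : B -> R) :
  {in P &, injective f} -> (forall a, P a -> Q (f a)) -> (forall b, 0 <= h b) ->
  \sum_(a | P a) h (f a) <= \sum_(b | Q b) h b.
Proof.
move=> f_inj PQ h_ge0; rewrite -(big_imset h f_inj) /=.
rewrite [X in _ <= X](bigID (mem (f @: P))) /=.
have -> : \sum_(b in f @: P) h b = \sum_(b | Q b && (b \in f @: P)) h b.
  apply: eq_bigl => b; apply/idP/andP => [fPb | [] //]; split=> //.
  by case/imsetP: fPb => a Pa ->; exact: PQ.
by rewrite lerDl sumr_ge0.
Qed.

Lemma sum_setD_le n d (I : {set 'I_n}) (h : {set 'I_n} -> R) : (forall K, 0 <= h K) ->
  \sum_(J : {set 'I_n} | (#|J| <= d)%N) h (J :\: I)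
  <= (2 ^ #|I|)%:R * \sum_(K : {set 'I_n} | (#|K| <= d)%N) h K.
Proof.
move=> h_ge0; pose split_at_I J := (J :&: I, J :\: I).
apply: le_trans (@ler_sum_inj _ _ (fun J : {set 'I_n} => #|J| <= d)%N
  (fun x : {set 'I_n} * {set 'I_n} => (x.1 \subset I) && (#|x.2| <= d)%N) split_at_I
  (fun x => h x.2) _ _ _) _ => //.
- by move=> J1 J2 _ _ [EI ED]; rewrite -(setID J1 I) -(setID J2 I) EI ED.
- by move=> J Jd; rewrite /= subsetIr (leq_trans (subset_leq_card (subsetDl J I)) Jd).
rewrite -(pair_big_dep (fun L : {set 'I_n} => L \subset I)
  (fun _ (K : {set 'I_n}) => (#|K| <= d)%N) (fun _ K => h K)) /=.
rewrite (eq_bigl (fun L => L \in powerset I)) => [|L]; last by rewrite powersetE.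
by rewrite sumr_const card_powerset mulr_natl.
Qed.

Lemma sum_inv_npow_setD_le n d (I : {set 'I_n}) :
  (0 < n)%N -> (0 < d)%N -> (#|I| <= d)%N ->
  \sum_(J : {set 'I_n} | (#|J| <= d)%N) ((n%:R : R) ^+ maxn 1 #|J :\: I|)^-1
  <= (d ^ 2 * 2 ^ d)%N%:R.
Proof.
move=> n_gt0 d_gt0 Id.
have n_pos : (0 : R) < n%:R by rewrite ltr0n.
have [d_gt1 | d_le1] := ltnP 1 d.
  apply: le_trans (@sum_setD_le n d I (fun K => ((n%:R : R) ^+ maxn 1 #|K|)^-1) _) _.
    by move=> K; rewrite invr_ge0 exprn_ge0 ?ltW.
  apply: le_trans (ler_wpM2l _ (sum_inv_npow_small_sets d n_gt0)) _; first exact: ler0n.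
  rewrite -natrM ler_nat mulnC leq_mul ?leq_pexp2l //; nia.
have -> : d = 1%N by apply/eqP; rewrite eqn_leq d_le1.
apply: le_trans (_ : \sum_(J : {set 'I_n} | (#|J| <= 1)%N) (n%:R : R)^-1 <= _).
  apply: ler_sum => J _; rewrite lef_pV2 ?posrE ?exprn_gt0 //.
  by rewrite -natrX ler_nat -{1}(expn1 n) leq_pexp2l ?leq_maxl.
rewrite (sum_sets_by_card n 1 (fun _ => (n%:R : R)^-1)) !big_ord_recl big_ord0 /=.
rewrite bin0 bin1 mul1r mulfV ?gt_eqF // addr0.
have : (n%:R : R)^-1 <= 1 by rewrite invf_le1 ?ler1n.
by rewrite (_ : (1 ^ 2 * 2 ^ 1)%N = 2%N) //; lra.
Qed.

End Counting.

Lemma card_setU_setD (T : finType) (I J : {set T}) : #|I :|: J| = (#|I| + #|J :\: I|)%N.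
Proof. by rewrite cardsU cardsD setIC addnBA // subset_leq_card // subsetIl. Qed.

Section ExponentialBounds.
Variable R : realType.

Lemma expr_le_expR (q Q D N : R) k : 0 <= q -> q <= Q -> 0 < Q -> 0 < D ->
  D <= ln (1 / Q) -> N / D <= k%:R -> q ^+ k <= expR (- N).
Proof.
move=> q_ge0 qQ Q_gt0 D_gt0 DQ ND.
apply: le_trans (_ : Q ^+ k <= _); first by rewrite lerXn2r // nnegrE (le_trans q_ge0).
rewrite -[Q ^+ k]lnK ?posrE ?exprn_gt0 // ler_expR lnXn // -mulr_natl.
have lnQ : ln Q = - ln (1 / Q) by rewrite div1r lnV ?posrE // opprK.
have : N <= k%:R * D by rewrite -ler_pdivrMr.
have : k%:R * D <= k%:R * ln (1 / Q) by rewrite ler_wpM2l ?ler0n.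
by rewrite lnQ; lra.
Qed.

Lemma expR_budget (b n K : nat) (delta : R) : (0 < n)%N -> (0 < K)%N -> 0 < delta ->
  expR (- (b%:R * ln n%:R + ln (1 / delta) + ln K%:R)) = delta / (K%:R * n%:R ^+ b).
Proof.
move=> n_gt0 K_gt0 delta_gt0.
have n_pos : (0 : R) < n%:R by rewrite ltr0n.
have K_pos : (0 : R) < K%:R by rewrite ltr0n.
rewrite expRN !expRD mulr_natl -lnXn // !lnK ?posrE ?exprn_gt0 ?divr_gt0 //.
by field; rewrite !gt_eqF ?exprn_gt0.
Qed.

End ExponentialBounds.

Section SeparationRates.
Variables (R : realType) (p : R).
Hypotheses (p_gt0 : 0 < p) (p_lt1 : p < 1).

Definition sepA d w : R := 1 - 2 * p ^+ d + 2 * p ^+ (2 * d - w).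

Definition sepB d w : R := 1 + p ^+ d - p ^+ w.

Definition sep_rate d w : R := Num.min (ln (1 / sepA d w)) (ln (1 / sepB d w)).

Lemma expr_le_of_leq k l : (k <= l)%N -> p ^+ l <= p ^+ k.
Proof. by move=> kl; rewrite ler_wiXn2l // ltW. Qed.

Lemma sepA_in01 d w : (w < d)%N -> 0 < sepA d w < 1.
Proof.
move=> wd; rewrite /sepA (_ : (2 * d - w)%N = (d + (d - w))%N); last by lia.
rewrite exprD; set P := p ^+ (d - w); set Z := p ^+ d.
have P_lt1 : P < 1 by rewrite exprn_ilt1 ?ltW // subn_eq0 -ltnNge.
have Z_gt0 : 0 < Z by exact: exprn_gt0.
have Z_le_P : Z <= P by apply: expr_le_of_leq; exact: leq_subr.
have : Z * (1 - P) <= P * (1 - P) by rewrite ler_wpM2r // subr_ge0 ltW.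
have : 0 < Z * (1 - P) by rewrite mulr_gt0 // subr_gt0.
by move=> *; apply/andP; split; nra.
Qed.

Lemma sepB_in01 d w : (w < d)%N -> 0 < sepB d w < 1.
Proof.
move=> wd; rewrite /sepB; set W := p ^+ w; set P := p ^+ (d - w).
have -> : p ^+ d = W * P by rewrite -exprD subnKC // ltnW.
have P_lt1 : P < 1 by rewrite exprn_ilt1 ?ltW // subn_eq0 -ltnNge.
have P_gt0 : 0 < P by exact: exprn_gt0.
have W_gt0 : 0 < W by exact: exprn_gt0.
have W_le1 : W <= 1 by rewrite exprn_ile1 ?ltW.
by apply/andP; split; nra.
Qed.

Lemma agree_prob_le_sepB_pred i c d :
  (c < i)%N -> (i <= d)%N -> agree_prob p i c i <= sepB d (d - 1).
Proof.
move=> ci id; rewrite /agree_prob /sepB subn1.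
have i_gt0 : (0 < i)%N by apply: leq_ltn_trans ci.
have -> : p ^+ i = p ^+ i.-1 * p by rewrite -exprSr prednK.
have -> : p ^+ d = p ^+ d.-1 * p by rewrite -exprSr prednK // (leq_trans i_gt0).
have pc : p ^+ i.-1 <= p ^+ c by apply: expr_le_of_leq; rewrite -ltnS prednK.
have pd : p ^+ d.-1 <= p ^+ i.-1 by apply: expr_le_of_leq; rewrite -!subn1 leq_sub2r.
have : 0 <= (p ^+ i.-1 - p ^+ d.-1) * (1 - p) by apply: mulr_ge0; rewrite subr_ge0 // ltW.
nra.
Qed.

(* Here c = |J ∩ I|; the term p^|J| is bounded using either c <= i or c + b <= d,
   depending on how i compares with d - b and 2 p^b with 1. *)
Lemma agree_prob_le_sep i c b d :
  (0 < b)%N -> (c <= i)%N -> (i <= d)%N -> (c + b <= d)%N ->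
  agree_prob p i (c + b) (i + b) <= sepA d (d - b) \/
  agree_prob p i (c + b) (i + b) <= sepB d (d - b).
Proof.
move=> b_gt0 ci id cbd; have bd : (b <= d)%N by apply: leq_trans cbd; exact: leq_addl.
rewrite /agree_prob /sepA /sepB (_ : (2 * d - (d - b))%N = (d + b)%N); last by lia.
set P := p ^+ b; set Y := p ^+ i; set Z := p ^+ (d - b).
rewrite [p ^+ (i + b)]exprD [p ^+ (d + b)]exprD -/P -/Y.
have eD : p ^+ d = Z * P by rewrite -exprD subnK.
have YP_le : Y * P <= p ^+ (c + b) by rewrite -exprD; apply: expr_le_of_leq; rewrite leq_add2r.
have d_le : p ^+ d <= p ^+ (c + b) by exact: expr_le_of_leq.
have dY : p ^+ d <= Y by exact: expr_le_of_leq.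
have P_le1 : P <= 1 by rewrite exprn_ile1 ?ltW.
have [i_small | i_large] := leqP i (d - b).
  right; have : 0 <= (Y - Z) * (1 - P).
    by apply: mulr_ge0; rewrite subr_ge0 // expr_le_of_leq.
  rewrite eD; nra.
have [P_small | P_large] := lerP (2 * P) 1.
  left; have : 0 <= (Y - p ^+ d) * (1 - 2 * P) by apply: mulr_ge0; rewrite subr_ge0.
  nra.
right; have : 0 <= (Z - Y) * (2 * P - 1).
  by apply: mulr_ge0; rewrite subr_ge0; [apply: expr_le_of_leq; exact: ltnW | exact: ltW].
rewrite eD in d_le *; nra.
Qed.

Lemma agree_prob_sets_le n d (I J : {set 'I_n}) :
  (#|I| <= d)%N -> (#|J| <= d)%N -> J != I ->
  let w := (d - maxn 1 #|J :\: I|)%N in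
  agree_prob p #|I| #|J| #|I :|: J| <= sepA d w \/
  agree_prob p #|I| #|J| #|I :|: J| <= sepB d w.
Proof.
move=> Id Jd JI w; rewrite /w card_setU_setD -(cardsID I J) in Jd *.
have JI_le : (#|J :&: I| <= #|I|)%N by rewrite subset_leq_card // subsetIr.
have [b0 | b_gt0] := posnP #|J :\: I|; last first.
  by rewrite (maxn_idPr b_gt0); apply: agree_prob_le_sep.
have JsubI : J \subset I by rewrite -setD_eq0 -cards_eq0 b0.
right; rewrite b0 !addn0; apply: agree_prob_le_sepB_pred => //.
by rewrite (setIidPl JsubI) proper_card // properEneq JI.
Qed.

Lemma agree_pow_le n d m K delta (I J : {set 'I_n}) :
  (0 < n)%N -> (0 < d)%N -> (0 < K)%N -> 0 < delta ->
  (#|I| <= d)%N -> (#|J| <= d)%N -> J != I ->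
  (forall w, (w <= d - 1)%N ->
     ((d - w)%N%:R * ln n%:R + ln (1 / delta) + ln K%:R) / sep_rate d w <= m%:R) ->
  agree_prob p #|I| #|J| #|I :|: J| ^+ m <= delta / (K%:R * n%:R ^+ maxn 1 #|J :\: I|).
Proof.
move=> n_gt0 d_gt0 K_gt0 delta_gt0 Id Jd JI budget.
have b_gt0 : (0 < maxn 1 #|J :\: I|)%N by rewrite leq_max.
have b_le : (maxn 1 #|J :\: I| <= d)%N.
  by rewrite geq_max d_gt0 (leq_trans _ Jd) // subset_leq_card // subsetDl.
have w_lt : (d - maxn 1 #|J :\: I| < d)%N by rewrite ltn_subrL b_gt0.
have := budget _ (leq_sub2l d b_gt0); rewrite subKn // -expR_budget //.
have /andP[A_gt0 A_lt1] := sepA_in01 w_lt.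
have /andP[B_gt0 B_lt1] := sepB_in01 w_lt.
have rate_gt0 : 0 < sep_rate d (d - maxn 1 #|J :\: I|).
  by rewrite lt_min !ln_gt0 // !div1r invf_gt1.
have q_ge0 : 0 <= agree_prob p #|I| #|J| #|I :|: J| by apply: agree_prob_ge0; rewrite !ltW.
case: (agree_prob_sets_le Id Jd JI) => q_le; apply: expr_le_expR q_ge0 q_le _ rate_gt0 _ => //.
  by rewrite ge_min lexx.
by rewrite ge_min lexx orbT.
Qed.

End SeparationRates.

Theorem lemma3 (R : realType) (n d : nat) (p delta : R) (I : {set 'I_n}) (m : nat) :
  (1 <= n)%N -> (1 <= d)%N ->
  0 < p < 1 -> 0 < delta < 1 ->
  (#|I| <= d)%N ->
  (0 < m)%N ->
  (forall w : nat, (w <= d - 1)%N ->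
     ((d - w)%N%:R * ln (n%:R) + ln (1 / delta) + ln ((d ^ 2 * 2 ^ d)%N%:R))
       / Num.min (ln (1 / (1 - 2 * p ^+ d + 2 * p ^+ (2 * d - w)%N)))
                 (ln (1 / (1 + p ^+ d - p ^+ w)))
     <= m%:R) ->
  1 - delta <= mx_prob p (fun M : 'M[bool]_(m, n) => separable I d M).
Proof.
move=> n_gt0 d_gt0 /andP[p_gt0 p_lt1] /andP[delta_gt0 _] Id _ budget.
set K := (d ^ 2 * 2 ^ d)%N.
have K_gt0 : (0 < K)%N by rewrite muln_gt0 !expn_gt0 d_gt0.
have K_pos : (0 : R) < K%:R by rewrite ltr0n.
apply: le_trans (mx_prob_separable_ge _ m I d); last by rewrite !ltW.
rewrite lerD2l lerN2.
apply: le_trans (_ : \sum_(J : {set 'I_n} | (#|J| <= d)%N && (J != I))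
  delta / K%:R * (n%:R ^+ maxn 1 #|J :\: I|)^-1 <= _).
  apply: ler_sum => J /andP[Jd JI]; rewrite -mulrA -invfM.
  exact: (agree_pow_le p_gt0 p_lt1 _ _ _ _ _ _ _ budget).
rewrite -mulr_sumr -[X in _ <= X](divfK (lt0r_neq0 K_pos)).
apply: ler_wpM2l; first by rewrite divr_ge0 ?ltW.
apply: le_trans (sum_inv_npow_setD_le R n_gt0 d_gt0 Id).
rewrite [X in _ <= X](bigID (fun J => J != I)) /= lerDl sumr_ge0 // => J _.
by rewrite invr_ge0 exprn_ge0 // ler0n.
Qed.
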